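(* (a) For every integer $n\ge 2$, $\mathrm{spt}2_d(n)=2p_d(n-1)-p_d(n)$. (b) For every integer $n\ge 4$, $\mathrm{spt}3_d(n)=2p_d(n-3)-2p_d(n-1)+p_d(n)$.
   Context: $\mathrm{spt}k_d(n)$ is the number of partitions of $n$ in which the smallest part occurs exactly $k$ times and all remaining parts (those larger than the smallest part) are pairwise distinct. $p_d(n)$ is the number of partitions of $n$ into distinct parts, with $p_d(0)=1$. *)

From mathcomp Require Import all_boot.
Set Implicit Arguments. Unset Strict Implicit. Unset Printing Implicit Defensive.

(* A partition of n is encoded by its multiplicity function
   m : 'I_(n+1) -> 'I_(n+1), where m i = number of parts equal to i.
   Since every part and every multiplicity is <= n, this encoding is a
   bijection with the (unordered) integer partitions of n. *)
Definition mult_fun (n : nat) := {ffun 'I_n.+1 -> 'I_n.+1}.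

Definition is_partition (n : nat) (m : mult_fun n) : bool :=
  (m ord0 == 0 :> nat) && (\sum_(i < n.+1) i * m i == n).

Definition distinct_parts (n : nat) (m : mult_fun n) : bool :=
  [forall i, m i <= 1].

Definition pd (n : nat) : nat :=
  #|[set m : mult_fun n | is_partition m && distinct_parts m]|.

Definition smallest_part (n : nat) (m : mult_fun n) (s : 'I_n.+1) : bool :=
  (0 < m s) && [forall j : 'I_n.+1, (0 < j < s) ==> (m j == 0 :> nat)].

Definition sptkd_prop (k n : nat) (m : mult_fun n) : bool :=
  is_partition m &&
  [exists s : 'I_n.+1, smallest_part m s && (m s == k :> nat) &&
     [forall j : 'I_n.+1, (s < j) ==> (m j <= 1)]].

Definition sptkd (k n : nat) : nat := #|[set m : mult_fun n | sptkd_prop k m]|.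

From mathcomp Require Import all_boot all_algebra.
From mathcomp Require Import ring zify.
Set Implicit Arguments.
Unset Strict Implicit.
Unset Printing Implicit Defensive.

Import GRing.Theory.
Local Open Scope ring_scope.

(* Counting multiplicity functions whose value at each part i lies in a
   prescribed set and whose weight is n gives the coefficient of X^n in the
   product over i of the generating polynomials of the allowed multiplicities.
   With D_N(s) = prod_(s < i <= N) (1 + X^i) this yields
   p_d(n) = [X^n] D_n(0) and spt k_d(n) = [X^n] U_k, where
   U_k = sum_(1 <= s <= n) X^(s k) D_n(s).  From D(s-1) = (1 + X^s) D(s) one
   gets U_(k+1) = X^k (D(0) + U_k - X^(n k)) - U_k, and U_1 = D(0) - 1, so U_2
   and U_3 are combinations of shifts of D(0); truncating D at N does not
   change its coefficients of degree at most N. *)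

Lemma card_mult_fun_coef n (F : 'I_n.+1 -> 'I_n.+1 -> bool) :
  (#|[set m : mult_fun n | [forall i, F i (m i)] && (\sum_(i < n.+1) i * m i == n)%N]|)%:Z
  = (\prod_(i < n.+1) \sum_(j < n.+1) (F i j)%:R *: 'X^(i * j) : {poly int})`_n.
Proof.
rewrite bigA_distr_bigA coef_sum -sum1dep_card -natz natr_sum /=.
rewrite [RHS](bigID (fun f : mult_fun n => [forall i, F i (f i)])) /=.
rewrite [X in _ = _ + X]big1 ?addr0; last first.
  move=> f /forallPn [i Fi].
  by rewrite (bigD1 i) //= (negbTE Fi) scale0r mul0r coef0.
rewrite [RHS]big_mkcond [LHS]big_mkcond; apply: eq_bigr => f _.
case: (boolP [forall i, F i (f i)]) => [Ff|//] /=.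
have -> : \prod_(i < n.+1) ((F i (f i))%:R *: 'X^(i * f i))
          = 'X^(\sum_(i < n.+1) i * f i)%N :> {poly int}.
  rewrite (big_morph (fun k => 'X^k : {poly int}) (@exprD _ _) (expr0 _)).
  by apply: eq_bigr => i _; rewrite (forallP Ff) scale1r.
by rewrite coefXn eq_sym; case: eqP.
Qed.

Lemma sum_scale_pred_single n (P : nat -> bool) (Q : nat -> {poly int}) k :
  (k < n.+1)%N -> (forall j, j != k -> ~~ P j) ->
  \sum_(j < n.+1) (P j)%:R *: Q j = (P k)%:R *: Q k.
Proof.
move=> lt_kn Pk; rewrite (bigD1 (Ordinal lt_kn)) //= big1 ?addr0 // => j neq_jk.
by rewrite (negbTE (Pk _ neq_jk)) scale0r.
Qed.

Lemma sum_scale_leq1 n (i : nat) : (0 < n)%N ->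
  \sum_(j < n.+1) ((j <= 1)%N)%:R *: 'X^(i * j) = 1 + 'X^i :> {poly int}.
Proof.
case: n => [//|n] _; rewrite big_ord_recl /= muln0 expr0 scale1r; congr (_ + _).
rewrite (@sum_scale_pred_single _ (fun j => bump 0 j <= 1)%N
                                 (fun j => 'X^(i * bump 0 j)) 0) //=.
  by rewrite muln1 scale1r.
by case.
Qed.

Definition distinct_gf (N s : nat) : {poly int} := \prod_(s.+1 <= i < N.+1) (1 + 'X^i).

Lemma distinct_gf_rec N s :
  (s < N)%N -> distinct_gf N s = (1 + 'X^(s.+1)) * distinct_gf N s.+1.
Proof. by move=> lt_sN; rewrite /distinct_gf big_ltn // ltnS. Qed.

Lemma distinct_gf_top N : distinct_gf N N = 1.
Proof. by rewrite /distinct_gf big_geq. Qed.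

Lemma distinct_gf_coef_stable j d : (distinct_gf (j + d) 0)`_j = (distinct_gf j 0)`_j.
Proof.
elim: d => [|d IHd]; first by rewrite addn0.
rewrite addnS /distinct_gf big_nat_recr //= mulrDr mulr1 coefD coefMXn ltnS leq_addr.
by rewrite addr0.
Qed.

Definition distinct_mult n (i j : 'I_n.+1) : bool :=
  if i == 0 :> nat then j == 0 :> nat else (j <= 1)%N.

Lemma distinct_partitionE n :
  [set m : mult_fun n | is_partition m && distinct_parts m]
  = [set m : mult_fun n | [forall i, distinct_mult i (m i)]
                           && (\sum_(i < n.+1) i * m i == n)%N].
Proof.
apply/setP => m; rewrite !inE /is_partition /distinct_parts.
rewrite -andbA andbCA [RHS]andbC; congr (_ && _).
apply/andP/forallP => [[/eqP m0 /forallP m_le1] i | m_ok].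
  rewrite /distinct_mult; case: eqP => [i0|_]; last exact: m_le1.
  by rewrite (_ : i = ord0) ?m0 //; apply: val_inj.
split; first by have := m_ok ord0.
apply/forallP => i; have := m_ok i; rewrite /distinct_mult.
by case: eqP => // _ /eqP ->.
Qed.

Lemma pd_coef n : (0 < n)%N -> (pd n)%:Z = (distinct_gf n 0)`_n.
Proof.
move=> n_gt0; rewrite /pd distinct_partitionE card_mult_fun_coef.
rewrite /distinct_gf big_geq_mkord big_mkcond /=.
apply: (congr1 (fun p : {poly int} => p`_n)); rewrite [RHS]big_mkcond.
apply: eq_bigr => -[[|i] lt_in] _; rewrite /distinct_mult /=.
  rewrite (@sum_scale_pred_single _ (fun j => j == 0)%N (fun j => 'X^(0 * j)) 0) //=.
  by rewrite scale1r.
by rewrite sum_scale_leq1.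
Qed.

Definition spt_mult k n (s i j : 'I_n.+1) : bool :=
  if i == s :> nat then (0 < s)%N && (j == k :> nat)
  else if (i < s)%N then j == 0 :> nat else (j <= 1)%N.

Definition spt_smallest k n (s : 'I_n.+1) (m : mult_fun n) : bool :=
  is_partition m && [&& smallest_part m s, m s == k :> nat &
                        [forall j : 'I_n.+1, (s < j)%N ==> (m j <= 1)%N]].

Lemma smallest_part_gt0 n (m : mult_fun n) s :
  m ord0 = 0 :> nat -> smallest_part m s -> (0 < s)%N.
Proof.
move=> m0 /andP [ms_gt0 _]; rewrite lt0n; apply: contraTneq ms_gt0 => s0.
by rewrite (_ : s = ord0) ?m0 //; apply: val_inj.
Qed.

Lemma smallest_part_uniq n (m : mult_fun n) s s' : m ord0 = 0 :> nat ->
  smallest_part m s -> smallest_part m s' -> s = s'.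
Proof.
move=> m0.
have lt_smallest a b : smallest_part m a -> smallest_part m b -> ~ (a < b)%N.
  move=> sa /andP [_ /forallP below_b] lt_ab; have /andP [ma_gt0 _] := sa.
  have /implyP := below_b a; rewrite (smallest_part_gt0 m0 sa) lt_ab => /(_ isT).
  by move/eqP=> ma0; rewrite ma0 in ma_gt0.
move=> ss ss'; apply: val_inj.
by case: (ltngtP s s') => // [/(lt_smallest _ _ ss ss')[] | /(lt_smallest _ _ ss' ss)[]].
Qed.

Lemma spt_smallestE k n (s : 'I_n.+1) : (0 < k)%N ->
  [set m : mult_fun n | spt_smallest k s m]
  = [set m : mult_fun n | [forall i, spt_mult k s i (m i)]
                           && (\sum_(i < n.+1) i * m i == n)%N].
Proof.
move=> k_gt0; apply/setP => m; rewrite !inE /spt_smallest /is_partition.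
rewrite -andbA andbCA [RHS]andbC; congr (_ && _); rewrite /spt_mult.
apply/idP/forallP => [|m_ok].
  case/and4P=> /eqP m0 ss /eqP msk /forallP above i.
  case: eqP => [eq_is|neq_is].
    by rewrite -msk (_ : i = s) ?eqxx ?(smallest_part_gt0 m0 ss) //; apply: val_inj.
  case: ltnP => [lt_is|le_si]; last first.
    apply: (implyP (above i)); rewrite ltn_neqAle le_si andbT.
    by apply/eqP=> eq_si; apply: neq_is.
  case: (posnP i) => [i0|i_gt0]; first by rewrite (_ : i = ord0) ?m0 //; apply: val_inj.
  by case/andP: ss => _ /forallP/(_ i); rewrite i_gt0 lt_is.
have := m_ok s; rewrite eqxx => /andP [s_gt0 /eqP msk].
have := m_ok ord0; rewrite /= eq_sym (negbTE (lt0n_neq0 s_gt0)) s_gt0 => -> /=.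
rewrite /smallest_part msk k_gt0 eqxx /=; apply/andP; split.
  apply/forallP => j; apply/implyP => /andP [_ lt_js].
  by have := m_ok j; rewrite (ltn_eqF lt_js) lt_js.
apply/forallP => j; apply/implyP => lt_sj.
by have := m_ok j; rewrite eq_sym (ltn_eqF lt_sj) ltnNge (ltnW lt_sj).
Qed.

Lemma sum_spt_mult k n (s i : 'I_n.+1) : (k <= n)%N ->
  \sum_(j < n.+1) (spt_mult k s i j)%:R *: 'X^(i * j)
  = if i == s :> nat then ((0 < s)%N)%:R *: 'X^(s * k)
    else if (i < s)%N then 1 else 1 + 'X^i :> {poly int}.
Proof.
move=> le_kn; rewrite /spt_mult; case: eqP => [eq_is|neq_is].
  rewrite (@sum_scale_pred_single _ (fun j => (0 < s) && (j == k))%N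
             (fun j => 'X^(i * j)) k) ?eq_is ?eqxx ?andbT //.
  by move=> j /negbTE ->; rewrite andbF.
case: ltnP => [_|le_si].
  rewrite (@sum_scale_pred_single _ (fun j => j == 0)%N (fun j => 'X^(i * j)) 0) //=.
  by rewrite muln0 expr0 scale1r.
rewrite sum_scale_leq1 //; apply: leq_trans (leq_ord i).
rewrite lt0n; apply/eqP => i0; apply: neq_is.
by apply/eqP; rewrite eqn_leq le_si andbT i0.
Qed.

Lemma card_spt_smallest k n (s : 'I_n.+1) : (0 < k)%N -> (k <= n)%N ->
  (#|[set m : mult_fun n | spt_smallest k s m]|)%:Z
  = if (0 < s)%N then ('X^(s * k) * distinct_gf n s)`_n else 0.
Proof.
move=> k_gt0 le_kn; rewrite spt_smallestE // card_mult_fun_coef.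
under eq_bigr => i _ do rewrite sum_spt_mult //.
rewrite (bigD1 s) //= eqxx; case: posnP => [_|s_gt0].
  by rewrite scale0r mul0r coef0.
rewrite scale1r; apply: (congr1 (fun p : {poly int} => ('X^(s * k) * p)`_n)).
rewrite /distinct_gf big_geq_mkord [RHS]big_mkcond [LHS]big_mkcond.
apply: eq_bigr => i _ /=; case: (eqVneq i s) => [->|neq_is]; first by rewrite ltnn.
have neq_is' : (i : nat) != s by [].
rewrite (negbTE neq_is'); case: ltnP => [lt_is|le_si]; first by rewrite ltnNge ltnW.
by rewrite ltn_neqAle eq_sym neq_is' le_si.
Qed.

Lemma sptkd_sum k n :
  sptkd k n = (\sum_(s < n.+1) #|[set m : mult_fun n | spt_smallest k s m]|)%N.
Proof.
rewrite /sptkd -sum1dep_card.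
under [in RHS]eq_bigr => s _ do rewrite -sum1dep_card big_mkcond.
rewrite exchange_big big_mkcond /=; apply: eq_bigr => m _.
case: (boolP (sptkd_prop k m)) => [/andP [m_part /existsP [s ms]] | not_spt].
  have {}ms : spt_smallest k s m by rewrite /spt_smallest m_part -!andbA in ms *.
  rewrite (bigD1 s) //= ms big1 // => s' neq_s's.
  case: ifP => // /andP [_ /andP [ss' _]].
  case/andP: m_part => /eqP m0 _; case/and3P: ms => _ ss _.
  by rewrite (smallest_part_uniq m0 ss' ss) eqxx in neq_s's.
rewrite big1 // => s _; case: ifP => // /andP [m_part ms]; case/negP: not_spt.
by rewrite /sptkd_prop m_part; apply/existsP; exists s; rewrite -andbA.
Qed.

Definition spt_gf (N k : nat) : {poly int} :=
  \sum_(0 <= t < N) 'X^(t.+1 * k) * distinct_gf N t.+1.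

Lemma sptkd_coef k n : (0 < k)%N -> (k <= n)%N -> (sptkd k n)%:Z = (spt_gf n k)`_n.
Proof.
move=> k_gt0 le_kn; rewrite sptkd_sum -natz natr_sum /spt_gf coef_sum.
under eq_bigr => s _ do rewrite natz card_spt_smallest //.
by rewrite big_ord_recl /= add0r big_mkord.
Qed.

Lemma sum_shifted_spt_gf N k :
  \sum_(0 <= t < N) 'X^(t * k) * distinct_gf N t
  = distinct_gf N 0 + spt_gf N k - 'X^(N * k).
Proof.
have split_last : \sum_(0 <= t < N.+1) 'X^(t * k) * distinct_gf N t
                  = \sum_(0 <= t < N) 'X^(t * k) * distinct_gf N t + 'X^(N * k).
  by rewrite big_nat_recr //= distinct_gf_top mulr1.
rewrite big_nat_recl // mul0n expr0 mul1r -/(spt_gf N k) in split_last.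
by rewrite split_last addrK.
Qed.

Lemma spt_gf_rec N k :
  spt_gf N k.+1 = 'X^k * (distinct_gf N 0 + spt_gf N k - 'X^(N * k)) - spt_gf N k.
Proof.
rewrite -sum_shifted_spt_gf mulr_sumr /spt_gf -sumrB.
apply: eq_big_nat => t /andP [_ lt_tN].
by rewrite (distinct_gf_rec lt_tN) mulnS mulSn !exprD; ring.
Qed.

Lemma spt_gf1 N : spt_gf N 1 = distinct_gf N 0 - 1.
Proof. by rewrite spt_gf_rec expr0 mul1r muln0 expr0; ring. Qed.

Lemma sptkd2_pd n : (2 <= n)%N -> (sptkd 2 n)%:Z = 2 * (pd n.-1)%:Z - (pd n)%:Z.
Proof.
case: n => [|[|n]] // _.
rewrite sptkd_coef // spt_gf_rec spt_gf1 muln1.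
rewrite (@pd_coef n.+2) // (@pd_coef n.+1) // -(distinct_gf_coef_stable n.+1 1) addn1.
rewrite coefB coefXnM /= !coefB !coefD coef1 coefXn /=.
rewrite subn1 /= coefN coef1 /= (ltn_eqF (ltnSn _)) subr0; ring.
Qed.

Lemma sptkd3_pd n : (4 <= n)%N ->
  (sptkd 3 n)%:Z = 2 * (pd (n - 3))%:Z - 2 * (pd n.-1)%:Z + (pd n)%:Z.
Proof.
case: n => [|[|[|[|n]]]] // _.
rewrite sptkd_coef // spt_gf_rec spt_gf_rec spt_gf1 muln1.
rewrite (@pd_coef n.+4) // (@pd_coef n.+3) // (@pd_coef n.+1) //.
rewrite -(distinct_gf_coef_stable n.+1 3) -(distinct_gf_coef_stable n.+3 1).
rewrite !addnS !addn0 /=.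
rewrite !(coefB, coefD, coefXnM, coefN, coef1, coefXn) /= !subSS !subn0.
have -> : (n.+1 == n.+4) = false by apply/negbTE/eqP; lia.
have -> : (n.+2 == n.+4 * 2)%N = false by apply/negbTE/eqP; lia.
have -> : (n.+3 == n.+4) = false by apply/negbTE/eqP; lia.
rewrite !subr0; ring.
Qed.

Theorem corollary5 :
  (forall n : nat, (2 <= n)%N ->
     (sptkd 2 n)%:Z = 2 * (pd n.-1)%:Z - (pd n)%:Z)
  /\
  (forall n : nat, (4 <= n)%N ->
     (sptkd 3 n)%:Z = 2 * (pd (n - 3))%:Z - 2 * (pd n.-1)%:Z + (pd n)%:Z).
Proof. split; [exact: sptkd2_pd | exact: sptkd3_pd]. Qed.
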